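(* Let $S=\{p_1,\dots,p_n\}$ be a set of point sites in $\mathbb{R}^d$ with an admissible system of distance functions $\{d_{p_i}\}$, and let $C\subset\mathbb{R}^d$ be a bounded, open, path-connected set. Let $T\subset S$ with $T\neq\emptyset$ and $T\neq S$. Let $w=(w_1,\dots,w_n)$ be a weight vector such that $\mu(C\cap\mathrm{VR}_w(p,S))>0$ for every $p\in S$. Let $\delta>0$ and define $w'$ by $w'_i=w_i+\delta$ if $p_i\in T$ and $w'_i=w_i$ otherwise. Then there exists $t\in T$ with $\mu(C\cap\mathrm{VR}_{w'}(t,S))>\mu(C\cap\mathrm{VR}_w(t,S))$.
   Context: $\mu$ is a measure defined on all Lebesgue-measurable subsets of $\mathbb{R}^d$ such that $\mu$ and $d$-dimensional Lebesgue measure are mutually absolutely continuous. Each site $p\in S$ has a continuous function $d_p:\mathbb{R}^d\to\mathbb{R}_{\ge 0}$. For $p\neq q\in S$ and $\gamma\in\mathbb{R}$ let $R_\gamma(p,q)=\{z\in\mathbb{R}^d : d_p(z)-d_q(z)<\gamma\}$. The system $\{d_p\}_{p\in S}$ is called admissible if for all $p\neq q\in S$ and every bounded open set $C\subset\mathbb{R}^d$ there exist real numbers $m_{pq}<M_{pq}$ such that the function $\gamma\mapsto\mu(C\cap R_\gamma(p,q))$ is continuous on $\mathbb{R}$ and increases (monotonically) from $0$ to $\mu(C)$ as $\gamma$ grows from $m_{pq}$ to $M_{pq}$; moreover $C\cap R_\gamma(p,q)=\emptyset$ for $\gamma\le m_{pq}$ and $C\subset R_\gamma(p,q)$ for $\gamma\ge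 M_{pq}$. For a weight vector $w$, the additively weighted Voronoi region is $\mathrm{VR}_w(p_i,S)=\bigcap_{j\neq i}R_{w_i-w_j}(p_i,p_j)$, i.e. the set of $z$ with $d_{p_i}(z)-w_i<d_{p_j}(z)-w_j$ for all $j\neq i$. *)

From Stdlib Require Import Reals Lra.
From Stdlib Require Fin.
Open Scope R_scope.

Definition pt (d : nat) := Fin.t d -> R.

Fixpoint prodFin (d : nat) : (Fin.t d -> R) -> R :=
  match d return (Fin.t d -> R) -> R with
  | O => fun _ => 1
  | S k => fun f => f Fin.F1 * prodFin k (fun i => f (Fin.FS i))
  end.

Definition box_vol {d} (a b : pt d) : R := prodFin d (fun i => b i - a i).

Definition outer_le {d} (X : pt d -> Prop) (r : R) : Prop :=
  forall eta, 0 < eta ->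
  exists a b : nat -> pt d,
    (forall k i, a k i <= b k i) /\
    (forall x, X x -> exists k, forall i, a k i <= x i <= b k i) /\
    (forall N, sum_f_R0 (fun k => box_vol (a k) (b k)) N <= r + eta).

Definition leb_null {d} (X : pt d -> Prop) : Prop := outer_le X 0.

(** Open sets of R^d (sup-norm balls, same topology as Euclidean). *)
Definition rd_open {d} (A : pt d -> Prop) : Prop :=
  forall x, A x -> exists e, 0 < e /\
    forall y, (forall i, Rabs (y i - x i) < e) -> A y.

(** Lebesgue measurability (Stein-Shakarchi definition): for every eps > 0
    there is an open O containing E with m*(O \ E) <= eps. *)
Definition leb_measurable {d} (E : pt d -> Prop) : Prop :=
  forall eps, 0 < eps -> exists O, rd_open O /\ (forall x, E x -> O x) /\
    outer_le (fun x => O x /\ ~ E x) eps.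

Definition rd_bounded {d} (A : pt d -> Prop) : Prop :=
  exists M, forall x, A x -> forall i, Rabs (x i) <= M.

Definition cont_fun {d} (f : pt d -> R) : Prop :=
  forall x e, 0 < e -> exists h, 0 < h /\
    forall y, (forall i, Rabs (y i - x i) < h) -> Rabs (f y - f x) < e.

Definition rd_path_connected {d} (A : pt d -> Prop) : Prop :=
  forall x y, A x -> A y ->
  exists g : R -> pt d,
    g 0 = x /\ g 1 = y /\ (forall t, 0 <= t <= 1 -> A (g t)) /\
    (forall t e, 0 <= t <= 1 -> 0 < e -> exists h, 0 < h /\
       forall s, 0 <= s <= 1 -> Rabs (s - t) < h ->
         forall i, Rabs (g s i - g t i) < e).

Inductive ereal := ER (r : R) | EPInf.

Definition ere_lt (x y : ereal) : Prop :=
  match x, y with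
  | ER a, ER b => a < b
  | ER _, EPInf => True
  | EPInf, _ => False
  end.

Definition esum_to (f : nat -> ereal) (s : ereal) : Prop :=
  match s with
  | ER l => exists r : nat -> R, (forall n, f n = ER (r n)) /\ infinite_sum r l
  | EPInf => (exists n, f n = EPInf) \/
             (exists r : nat -> R, (forall n, f n = ER (r n)) /\
                cv_infty (fun N => sum_f_R0 r N))
  end.

(** mu is a measure defined on (at least) all Lebesgue-measurable sets. *)
Definition is_measure_on_leb {d} (mu : (pt d -> Prop) -> ereal) : Prop :=
  mu (fun _ => False) = ER 0 /\
  (forall A, leb_measurable A ->
     match mu A with ER r => 0 <= r | EPInf => True end) /\
  (forall A : nat -> pt d -> Prop,
     (forall k, leb_measurable (A k)) ->
     (forall k l x, k <> l -> A k x -> A l x -> False) ->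
     esum_to (fun k => mu (A k)) (mu (fun x => exists k, A k x))).

Definition mutually_ac_leb {d} (mu : (pt d -> Prop) -> ereal) : Prop :=
  forall A, leb_measurable A -> (mu A = ER 0 <-> leb_null A).

Definition Rgam {d n} (dist : Fin.t n -> pt d -> R) (i j : Fin.t n) (gamma : R)
  : pt d -> Prop := fun z => dist i z - dist j z < gamma.

Definition admissible {d n} (mu : (pt d -> Prop) -> ereal)
  (dist : Fin.t n -> pt d -> R) : Prop :=
  forall i j : Fin.t n, i <> j ->
  forall C : pt d -> Prop, rd_bounded C -> rd_open C ->
  exists m M : R, m < M /\
  exists f : R -> R,
    (forall gamma, mu (fun z => C z /\ Rgam dist i j gamma z) = ER (f gamma)) /\
    continuity f /\
    (forall g1 g2, m <= g1 -> g1 <= g2 -> g2 <= M -> f g1 <= f g2) /\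
    f m = 0 /\ mu C = ER (f M) /\
    (forall gamma, gamma <= m -> forall z, C z -> ~ Rgam dist i j gamma z) /\
    (forall gamma, M <= gamma -> forall z, C z -> Rgam dist i j gamma z).

Definition VR {d n} (dist : Fin.t n -> pt d -> R) (w : Fin.t n -> R)
  (i : Fin.t n) : pt d -> Prop :=
  fun z => forall j, j <> i -> Rgam dist i j (w i - w j) z.

(* Write phi_j = d_j - w_j and let gap(z) be the least phi_j over
   j in T minus the least phi_j over j outside T.  The gap is continuous, it
   is negative on the Voronoi regions of sites of T and positive on those of
   the other sites; as these regions meet C, path-connectedness of C gives a
   point z0 of C with 0 < gap(z0) < delta.  Since differences d_i - d_j are
   never constant on an open set (their measure profiles are continuous by
   admissibility), z0 can be moved inside the open set {0 < gap < delta} to a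
   point z1 where all phi_j are distinct.  Let t be the winner of T and s the
   winner outside T at z1.  After the raise, t beats every other site near
   z1, whereas before it lost to s; by admissibility the region of t then
   gains a whole cube around z1, which has positive measure. *)

From Stdlib Require Import Reals.
From Stdlib Require Fin.
From Stdlib Require Import Lra Lia List.
From Stdlib Require Import Classical FunctionalExtensionality PropExtensionality ClassicalEpsilon.
Open Scope R_scope.

Lemma set_eq {X : Type} (P Q : X -> Prop) : (forall z, P z <-> Q z) -> P = Q.
Proof.
  intro H. apply functional_extensionality; intro z.
  apply propositional_extensionality; auto.
Qed.

Lemma ER_inj a b : ER a = ER b -> a = b.
Proof. intro H; injection H; auto. Qed.

Lemma mu_ext {d} (mu : (pt d -> Prop) -> ereal) (P Q : pt d -> Prop) :
  (forall z, P z <-> Q z) -> mu P = mu Q.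
Proof. intro H. rewrite (set_eq P Q H). reflexivity. Qed.

Lemma mu_empty {d} (mu : (pt d -> Prop) -> ereal) (P : pt d -> Prop) :
  is_measure_on_leb mu -> (forall z, ~ P z) -> mu P = ER 0.
Proof.
  intros [H0 _] H. rewrite <- H0. apply mu_ext. intro z; split; [apply H | tauto].
Qed.

Lemma mu_nonneg {d} (mu : (pt d -> Prop) -> ereal) A r :
  is_measure_on_leb mu -> leb_measurable A -> mu A = ER r -> 0 <= r.
Proof.
  intros [_ [H _]] HA E. specialize (H A HA). rewrite E in H. exact H.
Qed.

(* The empty set has outer measure at most any r >= 0 (cover by degenerate
   boxes; in positive dimension these have volume 0). *)
Lemma outer_le_empty k (X : pt (S k) -> Prop) r :
  (forall z, ~ X z) -> 0 <= r -> outer_le X r.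
Proof.
  intros HX Hr eta Heta. exists (fun _ _ => 0), (fun _ _ => 0). split; [|split].
  - intros; lra.
  - intros x Hx; exfalso; exact (HX x Hx).
  - intro N.
    assert (Hz : sum_f_R0 (fun _ => box_vol (fun _ : Fin.t (S k) => 0) (fun _ => 0)) N = 0).
    { induction N as [|N IH]; simpl; unfold box_vol in *; simpl in *; [ring | rewrite IH; ring]. }
    rewrite Hz; lra.
Qed.

Lemma open_meas k (E : pt (S k) -> Prop) : rd_open E -> leb_measurable E.
Proof.
  intros HE eps Heps. exists E. split; [exact HE|]. split; [auto|].
  apply outer_le_empty; [intros z [a b]; auto | lra].
Qed.

Lemma sum_two (r : nat -> R) :
  (forall m, (2 <= m)%nat -> r m = 0) -> infinite_sum r (r 0%nat + r 1%nat).
Proof.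
  intros H eps Heps. exists 1%nat. intros m Hm.
  assert (Hs : sum_f_R0 r m = r 0%nat + r 1%nat).
  { clear Heps. induction m as [|m IHm]; [lia|]. destruct m; [simpl; ring|].
    change (sum_f_R0 r (S (S m))) with (sum_f_R0 r (S m) + r (S (S m))).
    rewrite H by lia. rewrite IHm by lia. ring. }
  rewrite Hs. unfold R_dist. rewrite Rminus_diag, Rabs_R0. exact Heps.
Qed.

Lemma mu_additive2 k (mu : (pt (S k) -> Prop) -> ereal) (X Y : pt (S k) -> Prop) u :
  is_measure_on_leb mu -> leb_measurable X -> leb_measurable Y ->
  (forall z, X z -> Y z -> False) ->
  mu (fun z => X z \/ Y z) = ER u ->
  exists x y, mu X = ER x /\ mu Y = ER y /\ u = x + y.
Proof.
  intros Hmu HX HY Hd Hu.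
  set (A := fun m : nat => match m with
              | O => X | 1%nat => Y | _ => fun _ : pt (S k) => False end).
  destruct Hmu as [H0 [_ Hadd]].
  assert (Hm : forall m, leb_measurable (A m)).
  { intros [|[|m]]; simpl; auto. apply open_meas. intros x []. }
  assert (Hdj : forall m l x, m <> l -> A m x -> A l x -> False).
  { intros [|[|m]] [|[|l]] x Hml; simpl; try tauto; intros; eapply Hd; eauto. }
  specialize (Hadd A Hm Hdj).
  assert (HU : mu (fun x => exists m, A m x) = ER u).
  { rewrite <- Hu. apply mu_ext. intro z; split.
    - intros [[|[|m]] Hk]; simpl in Hk; tauto.
    - intros [H|H]; [exists O | exists 1%nat]; exact H. }
  rewrite HU in Hadd. destruct Hadd as [r [Hr Hs]].
  exists (r O), (r 1%nat). split; [apply (Hr O)|]. split; [apply (Hr 1%nat)|].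
  apply (uniqueness_sum r); [exact Hs|]. apply sum_two.
  intros m Hk. specialize (Hr m). destruct m as [|[|m]]; try lia.
  simpl in Hr. rewrite H0 in Hr. symmetry; apply ER_inj; exact Hr.
Qed.

Definition fin_le (x y : ereal) : Prop := exists a b, x = ER a /\ y = ER b /\ a <= b.
Definition fin_lt (x y : ereal) : Prop := exists a b, x = ER a /\ y = ER b /\ a < b.

Lemma fin_le_refl a : fin_le (ER a) (ER a).
Proof. exists a, a. repeat split; lra. Qed.

Lemma fin_le_trans x y z : fin_le x y -> fin_le y z -> fin_le x z.
Proof.
  intros [a [b [-> [-> Hab]]]] [b' [c [Hb [-> Hbc]]]]. apply ER_inj in Hb. subst b'.
  exists a, c. repeat split; lra.
Qed.

Lemma fin_le_lt_trans x y z : fin_le x y -> fin_lt y z -> fin_lt x z.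
Proof.
  intros [a [b [-> [-> Hab]]]] [b' [c [Hb [-> Hbc]]]]. apply ER_inj in Hb. subst b'.
  exists a, c. repeat split; lra.
Qed.

Lemma fin_lt_ere_lt x y : fin_lt x y -> ere_lt x y.
Proof. intros [a [b [-> [-> Hab]]]]. exact Hab. Qed.

Lemma fin_min m (P : Fin.t m -> R -> Prop) :
  (forall i, exists e, 0 < e /\ forall e', 0 < e' <= e -> P i e') ->
  exists e, 0 < e /\ forall i, P i e.
Proof.
  revert P; induction m as [|m IH]; intros P H.
  - exists 1; split; [lra|]. intro i; inversion i.
  - destruct (IH (fun i e => forall e', 0 < e' <= e -> P (Fin.FS i) e')) as [e1 [He1 H1]].
    { intro i. destruct (H (Fin.FS i)) as [e [He H']]. exists e; split; [exact He|].
      intros e' He' e'' He''. apply H'; lra. }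
    destruct (H Fin.F1) as [e0 [He0 H0]].
    exists (Rmin e0 e1); split; [apply Rmin_pos; assumption|].
    intro i; apply (Fin.caseS' i).
    + apply H0. split; [apply Rmin_pos; assumption | apply Rmin_l].
    + intro p. apply (H1 p). split; [apply Rmin_pos; assumption | apply Rmin_r].
Qed.

Fixpoint fin_enum (n : nat) : list (Fin.t n) :=
  match n with O => nil | S m => Fin.F1 :: map Fin.FS (fin_enum m) end.

Lemma fin_enum_all n (i : Fin.t n) : In i (fin_enum n).
Proof.
  induction i as [m|m i IH]; simpl; [left; reflexivity | right; apply in_map; exact IH].
Qed.

Definition idx {n} (j : Fin.t n) : nat := proj1_sig (Fin.to_nat j).

Lemma idx_lt {n} (j : Fin.t n) : (idx j < n)%nat.
Proof. unfold idx. destruct (Fin.to_nat j); simpl; assumption. Qed.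

Lemma idx_onto {n} m : (m < n)%nat -> exists j : Fin.t n, idx j = m.
Proof. intro Hm. exists (Fin.of_nat_lt Hm). unfold idx. rewrite Fin.to_nat_of_nat. reflexivity. Qed.

Lemma idx_inj {n} (i j : Fin.t n) : idx i = idx j -> i = j.
Proof. apply Fin.to_nat_inj. Qed.

Lemma prodFin_ext d (f g : Fin.t d -> R) : (forall i, f i = g i) -> prodFin d f = prodFin d g.
Proof. intro H. replace g with f; [reflexivity|]. apply functional_extensionality; exact H. Qed.

Lemma prodFin_scale d (l : R) (f : Fin.t d -> R) :
  prodFin d (fun i => l * f i) = l ^ d * prodFin d f.
Proof.
  revert f; induction d as [|d IH]; intro f; simpl; [ring|].
  rewrite (IH (fun i => f (Fin.FS i))). ring.
Qed.

Lemma prodFin_nonneg d (f : Fin.t d -> R) : (forall i, 0 <= f i) -> 0 <= prodFin d f.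
Proof.
  revert f; induction d as [|d IH]; intros f H; simpl; [lra|].
  apply Rmult_le_pos; auto.
Qed.

Lemma prodFin_le_pow d (f : Fin.t d -> R) L :
  (forall i, 0 <= f i <= L) -> prodFin d f <= L ^ d.
Proof.
  revert f; induction d as [|d IH]; intros f H; simpl; [lra|].
  assert (H1 := H Fin.F1).
  assert (H2 := IH (fun i => f (Fin.FS i)) (fun i => H (Fin.FS i))).
  assert (0 <= prodFin d (fun i => f (Fin.FS i))) by (apply prodFin_nonneg; intro; apply H).
  apply Rmult_le_compat; lra.
Qed.

(* A box with all sides at most L and one side at most r has volume at most
   r * L^(d-1); stated multiplied by L to avoid the predecessor. *)
Lemma prodFin_thin d (f : Fin.t d -> R) L r j :
  (forall i, 0 <= f i <= L) -> f j <= r -> prodFin d f * L <= r * L ^ d.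
Proof.
  revert f; induction d as [|d IH]; intros f H Hj; [inversion j|].
  assert (H1 := H Fin.F1).
  assert (Hp := prodFin_le_pow d (fun i => f (Fin.FS i)) L (fun i => H (Fin.FS i))).
  assert (Hp0 : 0 <= prodFin d (fun i => f (Fin.FS i))) by (apply prodFin_nonneg; intro; apply H).
  revert Hj. apply (Fin.caseS' j); simpl; intros.
  - assert (Hm : f Fin.F1 * prodFin d (fun i => f (Fin.FS i)) <= r * L ^ d)
      by (apply Rmult_le_compat; lra).
    replace (r * (L * L ^ d)) with (r * L ^ d * L) by ring.
    apply Rmult_le_compat_r; lra.
  - assert (Hr := IH _ (fun i => f (Fin.FS i)) (fun i => H (Fin.FS i)) Hj). simpl in Hr.
    assert (0 <= prodFin d (fun i => f (Fin.FS i)) * L) by (apply Rmult_le_pos; lra).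
    replace (f Fin.F1 * prodFin d (fun i => f (Fin.FS i)) * L)
      with (f Fin.F1 * (prodFin d (fun i => f (Fin.FS i)) * L)) by ring.
    replace (r * (L * L ^ d)) with (L * (r * L ^ d)) by ring.
    apply Rmult_le_compat; lra.
Qed.

Lemma cont_coord {d} (i : Fin.t d) : cont_fun (fun z : pt d => z i).
Proof. intros x e He. exists e. split; [exact He|]. intros y Hy. apply Hy. Qed.

Lemma cont_const {d} (c : R) : cont_fun (fun _ : pt d => c).
Proof. intros x e He. exists 1. split; [lra|]. intros. rewrite Rminus_diag, Rabs_R0; exact He. Qed.

Lemma cont_sub {d} (f g : pt d -> R) :
  cont_fun f -> cont_fun g -> cont_fun (fun z => f z - g z).
Proof.
  intros Hf Hg x e He. destruct (Hf x (e/2)) as [h1 [H1 H1']]; [lra|].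
  destruct (Hg x (e/2)) as [h2 [H2 H2']]; [lra|].
  exists (Rmin h1 h2). split; [apply Rmin_pos; assumption|]. intros y Hy.
  assert (A1 := H1' y (fun i => Rlt_le_trans _ _ _ (Hy i) (Rmin_l _ _))).
  assert (A2 := H2' y (fun i => Rlt_le_trans _ _ _ (Hy i) (Rmin_r _ _))).
  revert A1 A2; split_Rabs; lra.
Qed.

Lemma cont_min {d} (f g : pt d -> R) :
  cont_fun f -> cont_fun g -> cont_fun (fun z => Rmin (f z) (g z)).
Proof.
  intros Hf Hg x e He. destruct (Hf x e) as [h1 [H1 H1']]; [lra|].
  destruct (Hg x e) as [h2 [H2 H2']]; [lra|].
  exists (Rmin h1 h2). split; [apply Rmin_pos; assumption|]. intros y Hy.
  assert (A1 := H1' y (fun i => Rlt_le_trans _ _ _ (Hy i) (Rmin_l _ _))).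
  assert (A2 := H2' y (fun i => Rlt_le_trans _ _ _ (Hy i) (Rmin_r _ _))).
  revert A1 A2. unfold Rmin.
  destruct (Rle_dec (f y) (g y)); destruct (Rle_dec (f x) (g x)); split_Rabs; lra.
Qed.

Lemma open_and {d} (A B : pt d -> Prop) :
  rd_open A -> rd_open B -> rd_open (fun z => A z /\ B z).
Proof.
  intros HA HB x [Ha Hb]. destruct (HA x Ha) as [e1 [E1 H1]]. destruct (HB x Hb) as [e2 [E2 H2]].
  exists (Rmin e1 e2). split; [apply Rmin_pos; assumption|]. intros y Hy. split.
  - apply H1; intro i; apply Rlt_le_trans with (1 := Hy i); apply Rmin_l.
  - apply H2; intro i; apply Rlt_le_trans with (1 := Hy i); apply Rmin_r.
Qed.

Lemma open_lt {d} (h : pt d -> R) c : cont_fun h -> rd_open (fun z => h z < c).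
Proof.
  intros Hh x Hx. destruct (Hh x (c - h x)) as [e [He H]]; [lra|]. exists e; split; [exact He|].
  intros y Hy. specialize (H y Hy). revert H; split_Rabs; lra.
Qed.

Lemma open_gt {d} (h : pt d -> R) c : cont_fun h -> rd_open (fun z => c < h z).
Proof.
  intros Hh x Hx. destruct (Hh x (h x - c)) as [e [He H]]; [lra|]. exists e; split; [exact He|].
  intros y Hy. specialize (H y Hy). revert H; split_Rabs; lra.
Qed.

Lemma open_between {d} (h : pt d -> R) a b :
  cont_fun h -> rd_open (fun z => a < h z < b).
Proof. intro Hh. apply open_and; [apply open_gt | apply open_lt]; exact Hh. Qed.

Lemma open_neq {d} (h : pt d -> R) c : cont_fun h -> rd_open (fun z => h z <> c).
Proof.
  intros Hh x Hx. destruct (Rlt_or_le (h x) c) as [Hlt|Hge].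
  - destruct (open_lt h c Hh x Hlt) as [e [He H']]. exists e; split; [exact He|].
    intros y Hy. specialize (H' y Hy). lra.
  - destruct (open_gt h c Hh x ltac:(lra)) as [e [He H']]. exists e; split; [exact He|].
    intros y Hy. specialize (H' y Hy). lra.
Qed.

Lemma open_imp {d} (P : Prop) (A : pt d -> Prop) : rd_open A -> rd_open (fun z => P -> A z).
Proof.
  intros HA x Hx. destruct (classic P) as [p|np].
  - destruct (HA x (Hx p)) as [e [He H]]. exists e; split; [exact He|]. intros y Hy _. auto.
  - exists 1; split; [lra|]. intros; contradiction.
Qed.

Lemma open_forall {d} n (A : Fin.t n -> pt d -> Prop) :
  (forall j, rd_open (A j)) -> rd_open (fun z => forall j, A j z).
Proof.
  intros HA x Hx.
  destruct (fin_min n (fun j e => forall y, (forall i, Rabs (y i - x i) < e) -> A j y))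
    as [e [He H]].
  { intro j. destruct (HA j x (Hx j)) as [e [He H]]. exists e; split; [exact He|].
    intros e' [He' He''] y Hy. apply H. intro i. apply Rlt_le_trans with e'; auto. }
  exists e; split; [exact He|]. intros y Hy j. apply H; exact Hy.
Qed.

Lemma bounded_sub {d} (A B : pt d -> Prop) :
  rd_bounded B -> (forall z, A z -> B z) -> rd_bounded A.
Proof. intros [M HM] H. exists M. intros x Hx. apply HM; auto. Qed.

(* Two facts are needed: a closed cube is Lebesgue measurable,
   and it is not null as soon as some bounded set is not null (a rescaled
   cover of the cube would cover that set with small total volume). *)

Definition cube {d} (c : pt d) (s : R) : pt d -> Prop :=
  fun z => forall i, c i - s <= z i <= c i + s.

Lemma open_not_cube {d} (c : pt d) s : rd_open (fun z => ~ cube c s z).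
Proof.
  intros x Hx. apply not_all_ex_not in Hx. destruct Hx as [i Hi].
  assert (Hd : s < Rabs (x i - c i)).
  { apply Rnot_le_lt. intro H. apply Hi. revert H; split_Rabs; lra. }
  exists (Rabs (x i - c i) - s). split; [lra|]. intros y Hy Hc.
  specialize (Hy i). specialize (Hc i). revert Hy Hd; split_Rabs; lra.
Qed.

Lemma null_dilate k (K X : pt (S k) -> Prop) (c : pt (S k)) lam :
  0 < lam -> (forall x, X x -> K (fun i => c i + x i / lam)) -> leb_null K -> leb_null X.
Proof.
  intros Hl HXK HK eta Heta.
  assert (Hld : 0 < lam ^ (S k)) by (apply pow_lt; exact Hl).
  destruct (HK (eta / lam ^ (S k))) as [a [b [Hab [Hcov Hsum]]]].
  { apply Rdiv_lt_0_compat; assumption. }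
  exists (fun m i => lam * (a m i - c i)), (fun m i => lam * (b m i - c i)).
  split; [|split].
  - intros m i. apply Rmult_le_compat_l; [lra|]. specialize (Hab m i); lra.
  - intros x Hx. destruct (Hcov _ (HXK x Hx)) as [m Hm]. exists m. intro i.
    specialize (Hm i). simpl in Hm.
    replace (x i) with (lam * (c i + x i / lam - c i)) by (field; lra).
    split; apply Rmult_le_compat_l; lra.
  - intro N. specialize (Hsum N).
    replace (sum_f_R0 (fun m => box_vol (fun i => lam * (a m i - c i))
                                        (fun i => lam * (b m i - c i))) N)
      with (lam ^ (S k) * sum_f_R0 (fun m => box_vol (a m) (b m)) N).
    + apply Rle_trans with (lam ^ (S k) * (0 + eta / lam ^ (S k))).
      * apply Rmult_le_compat_l; lra.
      * right; field; lra.
    + rewrite scal_sum. apply sum_eq. intros i _. unfold box_vol.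
      rewrite Rmult_comm, <- prodFin_scale. apply prodFin_ext. intro j. ring.
Qed.

Lemma cube_nonnull k (c : pt (S k)) s (X : pt (S k) -> Prop) :
  0 < s -> rd_bounded X -> ~ leb_null X -> ~ leb_null (cube c s).
Proof.
  intros Hs [M HM] HX HK.
  destruct (classic (exists x, X x)) as [[x0 Hx0]|Hn].
  2:{ apply HX, outer_le_empty; [intros z Hz; apply Hn; eauto | lra]. }
  assert (HM0 : 0 <= M) by (specialize (HM x0 Hx0 Fin.F1); pose proof (Rabs_pos (x0 Fin.F1)); lra).
  apply HX, (null_dilate k (cube c s) X c ((M + 1) / s)); [apply Rdiv_lt_0_compat; lra | | exact HK].
  intros x Hx i. specialize (HM x Hx i).
  assert (Habs : Rabs (x i / ((M + 1) / s)) <= s).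
  { replace (x i / ((M + 1) / s)) with (x i * (s / (M + 1))) by (field; lra).
    rewrite Rabs_mult, (Rabs_right (s / (M + 1))) by (apply Rle_ge, Rlt_le, Rdiv_lt_0_compat; lra).
    apply Rle_trans with ((M + 1) * (s / (M + 1))); [|right; field; lra].
    apply Rmult_le_compat_r; [apply Rlt_le, Rdiv_lt_0_compat|]; lra. }
  revert Habs; split_Rabs; lra.
Qed.

(* The slabs covering the shell between the closed cube of radius s and the
   open cube of radius s + r around c: for m < d the slab below the cube in
   coordinate m, for d <= m < 2d the slab above it in coordinate m - d, and
   degenerate boxes afterwards. *)
Definition slab_lo {d} (c : pt d) s r (m : nat) : pt d := fun j =>
  if (m <? d)%nat then c j - s - r
  else if (m <? 2 * d)%nat then (if (idx j =? m - d)%nat then c j + s else c j - s - r)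
  else 0.

Definition slab_hi {d} (c : pt d) s r (m : nat) : pt d := fun j =>
  if (m <? d)%nat then (if (idx j =? m)%nat then c j - s else c j + s + r)
  else if (m <? 2 * d)%nat then c j + s + r else 0.

Lemma slab_sides {d} (c : pt d) s r m j :
  0 <= r -> 0 <= s -> 0 <= slab_hi c s r m j - slab_lo c s r m j <= 2 * s + 2 * r.
Proof.
  intros Hr Hs. unfold slab_lo, slab_hi.
  destruct (m <? d)%nat; [destruct (idx j =? m)%nat |
    destruct (m <? 2 * d)%nat; [destruct (idx j =? m - d)%nat|]]; lra.
Qed.

Lemma slab_thin {d} (c : pt d) s r m :
  (m < 2 * d)%nat -> exists j, slab_hi c s r m j - slab_lo c s r m j = r.
Proof.
  intro Hm. unfold slab_lo, slab_hi. destruct (m <? d)%nat eqn:E.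
  - apply Nat.ltb_lt in E. destruct (idx_onto m E) as [j Hj]. exists j.
    rewrite Hj, Nat.eqb_refl. ring.
  - apply Nat.ltb_ge in E. destruct (idx_onto (n := d) (m - d) ltac:(lia)) as [j Hj].
    exists j. replace (m <? 2 * d)%nat with true by (symmetry; apply Nat.ltb_lt; lia).
    rewrite Hj, Nat.eqb_refl. ring.
Qed.

Lemma slab_cover {d} (c : pt d) s r x :
  (forall i, c i - s - r < x i < c i + s + r) -> ~ cube c s x ->
  exists m, forall j, slab_lo c s r m j <= x j <= slab_hi c s r m j.
Proof.
  intros Hx Hnc. apply not_all_ex_not in Hnc. destruct Hnc as [i Hi].
  assert (Hid := idx_lt i). unfold slab_lo, slab_hi.
  destruct (Rlt_le_dec (x i) (c i - s)) as [Hlt|Hge].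
  - exists (idx i). intro j. replace (idx i <? d)%nat with true by (symmetry; apply Nat.ltb_lt; lia).
    specialize (Hx j). destruct (idx j =? idx i)%nat eqn:E; [|lra].
    apply Nat.eqb_eq, idx_inj in E. subst j. lra.
  - exists (d + idx i)%nat. intro j.
    replace (d + idx i <? d)%nat with false by (symmetry; apply Nat.ltb_ge; lia).
    replace (d + idx i <? 2 * d)%nat with true by (symmetry; apply Nat.ltb_lt; lia).
    replace (d + idx i - d)%nat with (idx i) by lia.
    specialize (Hx j). destruct (idx j =? idx i)%nat eqn:E; [|lra].
    apply Nat.eqb_eq, idx_inj in E. subst j. lra.
Qed.

Lemma slab_degenerate k (c : pt (S k)) s r m :
  (2 * S k <= m)%nat -> box_vol (slab_lo c s r m) (slab_hi c s r m) = 0.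
Proof.
  intro Hm. unfold box_vol. rewrite (prodFin_ext _ _ (fun _ => 0)); [simpl; ring|].
  intro j. unfold slab_lo, slab_hi.
  replace (m <? S k)%nat with false by (symmetry; apply Nat.ltb_ge; lia).
  replace (m <? 2 * S k)%nat with false by (symmetry; apply Nat.ltb_ge; lia). ring.
Qed.

Lemma slab_vol k (c : pt (S k)) s r m :
  0 < r <= s -> box_vol (slab_lo c s r m) (slab_hi c s r m) <= r * (4 * s) ^ k.
Proof.
  intro Hr. set (L := 2 * s + 2 * r). unfold box_vol.
  assert (Hsides : forall j, 0 <= slab_hi c s r m j - slab_lo c s r m j <= L)
    by (intro j; apply slab_sides; lra).
  destruct (Nat.lt_ge_cases m (2 * S k)) as [Hm|Hm].
  - destruct (slab_thin c s r m Hm) as [j Hj].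
    assert (Ht := prodFin_thin (S k) _ L r j Hsides ltac:(lra)). simpl in Ht.
    assert (HL : L ^ k <= (4 * s) ^ k) by (apply pow_incr; unfold L; lra).
    assert (Hp : prodFin (S k) (fun j => slab_hi c s r m j - slab_lo c s r m j) <= r * L ^ k).
    { apply Rmult_le_reg_r with L; [unfold L; lra|]. simpl. lra. }
    apply Rle_trans with (1 := Hp). apply Rmult_le_compat_l; lra.
  - fold (box_vol (slab_lo c s r m) (slab_hi c s r m)). rewrite slab_degenerate by exact Hm.
    assert (0 <= (4 * s) ^ k) by (apply pow_le; lra). nra.
Qed.

Lemma sum_bound (u : nat -> R) m B :
  0 <= B -> (forall i, (i < m)%nat -> u i <= B) -> (forall i, (m <= i)%nat -> u i = 0) ->
  forall N, sum_f_R0 u N <= INR m * B.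
Proof.
  intros HB H1 H2.
  assert (Hmin : forall N, sum_f_R0 u N <= INR (Nat.min (S N) m) * B).
  { induction N as [|N IH]; simpl sum_f_R0.
    - destruct m as [|m]; [rewrite H2 by lia; simpl; lra|].
      specialize (H1 O ltac:(lia)). simpl. lra.
    - destruct (Compare_dec.le_lt_dec m (S N)) as [Hle|Hlt].
      + rewrite H2 by lia. rewrite Nat.min_r by lia. rewrite Nat.min_r in IH by lia. lra.
      + rewrite Nat.min_l by lia. rewrite Nat.min_l in IH by lia.
        rewrite (S_INR (S N)). specialize (H1 (S N) Hlt). lra. }
  intro N. apply Rle_trans with (1 := Hmin N).
  apply Rmult_le_compat_r; [exact HB|]. apply le_INR. lia.
Qed.

(* Closed cubes are Lebesgue measurable: the open cube of radius s + r
   contains the closed one, and the difference is covered by the 2d slabs,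
   of total volume at most 2d r (4s)^k, which is small for small r. *)
Lemma cube_meas k (c : pt (S k)) s : 0 < s -> leb_measurable (cube c s).
Proof.
  intros Hs eps Heps.
  set (Q := 2 * INR (S k) * (4 * s) ^ k + 1).
  assert (Hpow : 0 <= (4 * s) ^ k) by (apply pow_le; lra).
  assert (HQ : 1 <= Q) by (unfold Q; pose proof (pos_INR (S k)); nra).
  set (r := Rmin s (eps / Q)).
  assert (Hr : 0 < r) by (apply Rmin_pos; [|apply Rdiv_lt_0_compat]; lra).
  assert (Hrs : r <= s) by apply Rmin_l.
  assert (Hre : r * Q <= eps).
  { apply Rle_trans with (eps / Q * Q); [apply Rmult_le_compat_r; [lra | apply Rmin_r]|].
    right; field; lra. }
  exists (fun z => forall i, c i - s - r < z i < c i + s + r). split; [|split].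
  - apply (open_forall _ (fun i z => c i - s - r < z i < c i + s + r)). intro i.
    apply open_between, cont_coord.
  - intros x Hx i. specialize (Hx i). lra.
  - intros eta Heta. exists (slab_lo c s r), (slab_hi c s r). split; [|split].
    + intros m j. pose proof (slab_sides c s r m j). lra.
    + intros x [Hx Hnc]. exact (slab_cover c s r x Hx Hnc).
    + intro N. apply Rle_trans with (INR (2 * S k) * (r * (4 * s) ^ k)).
      * apply sum_bound; [nra | intros m _; apply slab_vol; lra | apply slab_degenerate].
      * rewrite mult_INR. simpl (INR 2). unfold Q in Hre. nra.
Qed.

(* Threshold regions: the points of C where d_t - d_j < g j for every j <> t.
   The part of C in VR_w(t, S) is the threshold region for g j = w t - w j. *)
Definition thr_region {d n} (C : pt d -> Prop) (dist : Fin.t n -> pt d -> R)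
  (t : Fin.t n) (g : Fin.t n -> R) : pt d -> Prop :=
  fun z => C z /\ forall j, j <> t -> Rgam dist t j (g j) z.

Definition thr_region_except {d n} (C : pt d -> Prop) (dist : Fin.t n -> pt d -> R)
  (t : Fin.t n) (g : Fin.t n -> R) (j0 : Fin.t n) : pt d -> Prop :=
  fun z => C z /\ forall j, j <> t -> j <> j0 -> Rgam dist t j (g j) z.

Lemma thr_region_split {d n} C (dist : Fin.t n -> pt d -> R) t g j0 z :
  j0 <> t ->
  thr_region C dist t g z <-> thr_region_except C dist t g j0 z /\ Rgam dist t j0 (g j0) z.
Proof.
  intro Hj0. unfold thr_region, thr_region_except. split.
  - intros [Hz Hr]. split; [split; [exact Hz|] | apply Hr; exact Hj0].
    intros j Hj _. apply Hr; exact Hj.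
  - intros [[Hz Hr] Hr0]. split; [exact Hz|]. intros j Hj.
    destruct (Fin.eq_dec j j0) as [->|Hne]; [exact Hr0 | apply Hr; assumption].
Qed.

Lemma thr_region_except_ext {d n} C (dist : Fin.t n -> pt d -> R) t g g' j0 z :
  (forall j, j <> j0 -> g j = g' j) ->
  thr_region_except C dist t g j0 z <-> thr_region_except C dist t g' j0 z.
Proof.
  intro Heq. unfold thr_region_except.
  split; intros [Hz Hr]; split; try exact Hz; intros j Hj Hj0; specialize (Hr j Hj Hj0);
    [rewrite <- Heq | rewrite Heq]; assumption.
Qed.

Lemma thr_region_ext {d n} C (dist : Fin.t n -> pt d -> R) t g g' z :
  (forall j, j <> t -> g j = g' j) -> thr_region C dist t g z <-> thr_region C dist t g' z.
Proof.
  intro Heq. unfold thr_region.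
  split; intros [Hz Hr]; split; try exact Hz; intros j Hj; specialize (Hr j Hj);
    [rewrite <- Heq | rewrite Heq]; assumption.
Qed.

Lemma no_right_jump (f : R -> R) g b :
  continuity_pt f g -> (forall c, g < c -> f c = b) -> f g = b.
Proof.
  intros Hf Hb. apply NNPP. intro Hne.
  destruct (Hf (Rabs (b - f g))) as [alp [Ha Hclose]].
  { apply Rabs_pos_lt. intro E; apply Hne; lra. }
  assert (Hc := Hclose (g + alp / 2)). simpl in Hc. unfold R_dist, D_x, no_cond in Hc.
  rewrite Hb in Hc by lra.
  assert (Habs : Rabs (g + alp / 2 - g) < alp) by (rewrite Rabs_right; lra).
  assert (Hneq : g <> g + alp / 2) by (intro; lra).
  specialize (Hc (conj (conj I Hneq) Habs)). lra.
Qed.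


Section Admissible.

Variables (k n : nat) (mu : (pt (S k) -> Prop) -> ereal) (dist : Fin.t n -> pt (S k) -> R).
Hypothesis Hmu : is_measure_on_leb mu.
Hypothesis Hac : mutually_ac_leb mu.
Hypothesis Had : admissible mu dist.
Hypothesis Hcont : forall i, cont_fun (dist i).
(* Some bounded set is not Lebesgue-null (in the application, a Voronoi
   region of positive measure). *)
Hypothesis Hnonnull : exists X : pt (S k) -> Prop, rd_bounded X /\ ~ leb_null X.

Lemma cont_Rdiff i j : cont_fun (fun z => dist i z - dist j z).
Proof. apply cont_sub; apply Hcont. Qed.

Lemma open_Rgam i j g : rd_open (Rgam dist i j g).
Proof. apply (open_lt (fun z => dist i z - dist j z)), cont_Rdiff. Qed.

Lemma open_thr_region C t g : rd_open C -> rd_open (thr_region C dist t g).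
Proof.
  intro HC. apply open_and; [exact HC|].
  apply (open_forall n (fun j z => j <> t -> Rgam dist t j (g j) z)). intro j.
  apply open_imp, open_Rgam.
Qed.

Lemma open_thr_region_except C t g j0 : rd_open C -> rd_open (thr_region_except C dist t g j0).
Proof.
  intro HC. apply open_and; [exact HC|].
  apply (open_forall n (fun j z => j <> t -> j <> j0 -> Rgam dist t j (g j) z)). intro j.
  apply open_imp, open_imp, open_Rgam.
Qed.

(* A bounded open set has finite measure (it is the top value of a profile). *)
Lemma mu_finite D (i j : Fin.t n) : rd_bounded D -> rd_open D -> i <> j -> exists a, mu D = ER a.
Proof.
  intros Hb Ho Hij. destruct (Had i j Hij D Hb Ho) as [m [M [_ [f [_ [_ [_ [_ [HfM _]]]]]]]]].
  exists (f M). exact HfM.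
Qed.

(* The profile gamma |-> mu(D /\ R_gamma(p_i, p_j)) of a bounded open set is
   finite, continuous and nondecreasing on the whole line (admissibility only
   asserts monotonicity on [m, M]; outside, the profile is constant). *)
Lemma adm_profile D i j :
  rd_bounded D -> rd_open D -> i <> j ->
  exists f, (forall g, mu (fun z => D z /\ Rgam dist i j g z) = ER (f g)) /\ continuity f /\
    (forall g1 g2, g1 <= g2 -> f g1 <= f g2).
Proof.
  intros HDb HDo Hij.
  destruct (Had i j Hij D HDb HDo)
    as [m [M [HmM [f [Hf [Hfc [Hfm [Hf0 [HfM [Hlo Hhi]]]]]]]]]].
  exists f. split; [exact Hf|]. split; [exact Hfc|].
  assert (Hlow : forall g, g <= m -> f g = 0).
  { intros g Hg. apply ER_inj. rewrite <- Hf. apply mu_empty; [exact Hmu|].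
    intros z [Hz Hr]. exact (Hlo g Hg z Hz Hr). }
  assert (Hhigh : forall g, M <= g -> f g = f M).
  { intros g Hg. apply ER_inj. rewrite <- Hf, <- HfM. apply mu_ext. intro z.
    split; [tauto|]. intro Hz; split; [exact Hz | exact (Hhi g Hg z Hz)]. }
  assert (Hclip : forall g, f g = f (Rmin (Rmax g m) M)).
  { intro g. unfold Rmax, Rmin.
    destruct (Rle_dec g m); destruct (Rle_dec m M); destruct (Rle_dec g M); try lra;
      first [ reflexivity | (rewrite (Hlow g), (Hlow m) by lra); reflexivity
            | (rewrite (Hhigh g) by lra); reflexivity | exfalso; lra ]. }
  intros g1 g2 H12. rewrite (Hclip g1), (Hclip g2).
  apply Hfm.
  - apply Rmin_glb; [apply Rmax_r | lra].
  - apply Rle_min_compat_r, Rle_max_compat_r; exact H12.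
  - apply Rmin_r.
Qed.

Lemma Rgam_mono D i j g1 g2 :
  rd_bounded D -> rd_open D -> i <> j -> g1 <= g2 ->
  fin_le (mu (fun z => D z /\ Rgam dist i j g1 z)) (mu (fun z => D z /\ Rgam dist i j g2 z)).
Proof.
  intros HDb HDo Hij H12. destruct (adm_profile D i j HDb HDo Hij) as [f [Hf [_ Hfm]]].
  exists (f g1), (f g2). rewrite !Hf. repeat split. apply Hfm; exact H12.
Qed.

Lemma cube_positive c s v : 0 < s -> mu (cube c s) = ER v -> 0 < v.
Proof.
  intros Hs Hv. destruct Hnonnull as [X [HXb HXn]].
  assert (Hm := cube_meas k c s Hs).
  assert (Hv0 : 0 <= v) by exact (mu_nonneg mu _ v Hmu Hm Hv).
  destruct (Rle_lt_or_eq_dec _ _ Hv0) as [Hpos|Hz]; [exact Hpos|]. subst v. exfalso.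
  apply (cube_nonnull k c s X Hs HXb HXn). apply Hac; assumption.
Qed.

(* Strict growth of the profile: if some point z1 of D has
   c1 < d_i(z1) - d_j(z1) < c2, then a whole cube around z1 is gained when
   the threshold is raised from c1 to c2. *)
Lemma strict_step D i j c1 c2 z1 :
  rd_bounded D -> rd_open D -> i <> j -> D z1 ->
  c1 < dist i z1 - dist j z1 < c2 ->
  fin_lt (mu (fun z => D z /\ Rgam dist i j c1 z)) (mu (fun z => D z /\ Rgam dist i j c2 z)).
Proof.
  intros HDb HDo Hij Hz1 Hc.
  set (W := fun z => D z /\ c1 < dist i z - dist j z < c2).
  assert (HWo : rd_open W) by (apply open_and; [exact HDo | apply open_between, cont_Rdiff]).
  destruct (HWo z1 (conj Hz1 Hc)) as [e [He HeW]].
  set (K := cube z1 (e / 2)).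
  assert (HKW : forall z, K z -> W z).
  { intros z Hz. apply HeW. intro l. specialize (Hz l). split_Rabs; lra. }
  set (D' := fun z => D z /\ ~ K z).
  assert (HD'o : rd_open D') by (apply open_and; [exact HDo | apply open_not_cube]).
  assert (HD'b : rd_bounded D') by (apply (bounded_sub D' D HDb); intros z [Hz _]; exact Hz).
  assert (E1 : mu (fun z => D z /\ Rgam dist i j c1 z) = mu (fun z => D' z /\ Rgam dist i j c1 z)).
  { apply mu_ext. intro z. unfold D', Rgam. split; [|tauto].
    intros [Hz Hr]. repeat split; try assumption.
    intro HK. destruct (HKW z HK) as [_ [Hw _]]. lra. }
  assert (E2 : mu (fun z => D z /\ Rgam dist i j c2 z) =
               mu (fun z => (D' z /\ Rgam dist i j c2 z) \/ K z)).
  { apply mu_ext. intro z. unfold D', Rgam. split.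
    - intros [Hz Hr]. destruct (classic (K z)); tauto.
    - intros [[[Hz _] Hr] | HK]; [tauto|]. destruct (HKW z HK) as [Hd [_ Hw]]. tauto. }
  destruct (Rgam_mono D' i j c1 c2 HD'b HD'o Hij ltac:(lra)) as [a [b [Ha [Hb Hab]]]].
  destruct (adm_profile D i j HDb HDo Hij) as [f [Hf _]].
  rewrite Hf in E2.
  assert (HKm : leb_measurable K) by (apply cube_meas; lra).
  assert (HRm : leb_measurable (fun z => D' z /\ Rgam dist i j c2 z))
    by (apply open_meas, open_and; [exact HD'o | apply open_Rgam]).
  destruct (mu_additive2 k mu _ K (f c2) Hmu HRm HKm) as [x [v [Hx [Hv Hs]]]].
  { intros z [[_ HnK] _] HK. exact (HnK HK). }
  { symmetry; exact E2. }
  assert (Hvpos := cube_positive z1 (e / 2) v ltac:(lra) Hv).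
  rewrite Hb in Hx. apply ER_inj in Hx. subst x.
  exists a, (f c2). rewrite E1, Ha, Hf. repeat split. lra.
Qed.

(* The difference of two distance functions is not constant on any nonempty
   bounded open set: its profile would jump from 0 to mu(V) at that constant,
   contradicting continuity of the profile. *)
Lemma level_set_thin V i j z0 g :
  rd_bounded V -> rd_open V -> i <> j -> V z0 ->
  ~ (forall z, V z -> dist i z - dist j z = g).
Proof.
  intros HVb HVo Hij Hz0 Hall.
  destruct (adm_profile V i j HVb HVo Hij) as [f [Hf [Hfc _]]].
  assert (Hlow : forall c, c <= g -> f c = 0).
  { intros c Hc. apply ER_inj. rewrite <- Hf. apply mu_empty; [exact Hmu|].
    intros z [Hz Hr]. unfold Rgam in Hr. rewrite (Hall z Hz) in Hr. lra. }
  assert (Hhigh : forall c, g < c -> f c = f (g + 1)).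
  { intros c Hc. apply ER_inj. rewrite <- !Hf. apply mu_ext. intro z. unfold Rgam.
    split; intros [Hz Hr]; split; try exact Hz; rewrite (Hall z Hz) in *; lra. }
  destruct (strict_step V i j (g - 1) (g + 1) z0 HVb HVo Hij Hz0) as [a [b [Ha [Hb Hab]]]].
  { rewrite (Hall z0 Hz0). lra. }
  rewrite Hf in Ha, Hb. apply ER_inj in Ha, Hb.
  assert (Hjump := no_right_jump f g (f (g + 1)) (Hfc g) Hhigh).
  rewrite Hlow in Hjump, Ha by lra. lra.
Qed.

(* Inside any nonempty open subset of a bounded set there is a point where
   the weighted distances d_i - w_i are pairwise distinct: the ties are
   removed one pair at a time, shrinking the open set each time. *)
Lemma generic_point (U : pt (S k) -> Prop) (w : Fin.t n -> R) z0 :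
  rd_bounded U -> rd_open U -> U z0 ->
  exists z1, U z1 /\ forall i j, i <> j -> dist i z1 - w i <> dist j z1 - w j.
Proof.
  intros HUb HUo Hz0.
  assert (Hpairs : forall L : list (Fin.t n * Fin.t n), exists V,
    rd_open V /\ (forall z, V z -> U z) /\ (exists z, V z) /\
    forall p, In p L -> fst p <> snd p ->
      forall z, V z -> dist (fst p) z - w (fst p) <> dist (snd p) z - w (snd p)).
  { induction L as [|[i j] L IH].
    - exists U. split; [exact HUo|]. split; [auto|]. split; [exists z0; exact Hz0|].
      simpl; tauto.
    - destruct IH as [V [HVo [HVU [[z1 Hz1] HV]]]].
      destruct (Fin.eq_dec i j) as [Eij|Nij].
      + exists V. split; [exact HVo|]. split; [exact HVU|]. split; [exists z1; exact Hz1|].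
        intros p [<-|Hp]; [simpl; intro; contradiction | apply HV; exact Hp].
      + assert (HVb : rd_bounded V) by exact (bounded_sub V U HUb HVU).
        destruct (not_all_ex_not _ _ (level_set_thin V i j z1 (w i - w j) HVb HVo Nij Hz1))
          as [z2 Hz2].
        apply imply_to_and in Hz2. destruct Hz2 as [HVz2 Hne].
        exists (fun z => V z /\ dist i z - dist j z <> w i - w j).
        split; [|split; [|split]].
        * apply open_and; [exact HVo | apply open_neq, cont_Rdiff].
        * intros z [Hz _]. exact (HVU z Hz).
        * exists z2. split; assumption.
        * intros p [<-|Hp] Hp' z [Hz Hz']; simpl.
          -- intro E. apply Hz'. lra.
          -- apply HV; assumption. }
  destruct (Hpairs (list_prod (fin_enum n) (fin_enum n))) as [V [_ [HVU [[z1 Hz1] HV]]]].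
  exists z1. split; [exact (HVU z1 Hz1)|]. intros i j Hij.
  apply (HV (i, j)); [apply in_prod; apply fin_enum_all | exact Hij | exact Hz1].
Qed.

Lemma step_mono C t s g g' j0 :
  rd_bounded C -> rd_open C -> s <> t ->
  (forall j, j <> j0 -> g j = g' j) -> g j0 <= g' j0 ->
  fin_le (mu (thr_region C dist t g)) (mu (thr_region C dist t g')).
Proof.
  intros HCb HCo Hst Heq Hle.
  assert (HRb : forall g0, rd_bounded (thr_region C dist t g0))
    by (intro g0; apply (bounded_sub _ C HCb); intros z [Hz _]; exact Hz).
  destruct (Fin.eq_dec j0 t) as [->|Hj0].
  - destruct (mu_finite _ s t (HRb g) (open_thr_region C t g HCo) Hst) as [a Ha].
    rewrite <- (mu_ext mu _ _ (fun z => thr_region_ext C dist t g g' z Heq)), Ha.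
    apply fin_le_refl.
  - set (D := thr_region_except C dist t g j0).
    assert (HDb : rd_bounded D) by (apply (bounded_sub _ C HCb); intros z [Hz _]; exact Hz).
    assert (HDo : rd_open D) by (apply open_thr_region_except; exact HCo).
    rewrite (mu_ext mu _ _ (fun z => thr_region_split C dist t g j0 z Hj0)).
    rewrite (mu_ext mu _ _ (fun z => thr_region_split C dist t g' j0 z Hj0)).
    rewrite <- (mu_ext mu _ _ (fun z => and_iff_compat_r _ (thr_region_except_ext C dist t g g' j0 z Heq))).
    apply Rgam_mono; [exact HDb | exact HDo | intro E; apply Hj0; symmetry; exact E | exact Hle].
Qed.

Lemma chain_mono C t s g g' :
  rd_bounded C -> rd_open C -> s <> t -> (forall j, g j <= g' j) ->
  fin_le (mu (thr_region C dist t g)) (mu (thr_region C dist t g')).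
Proof.
  intros HCb HCo Hst Hle.
  set (upd := fun (L : list (Fin.t n)) j => if in_dec Fin.eq_dec j L then g' j else g j).
  assert (HL : forall L, fin_le (mu (thr_region C dist t g)) (mu (thr_region C dist t (upd L)))).
  { induction L as [|j L IH].
    - apply (step_mono C t s g (upd nil) t HCb HCo Hst); intros; unfold upd; simpl; lra.
    - apply (fin_le_trans _ _ _ IH), (step_mono C t s _ _ j HCb HCo Hst).
      + intros j' Hj'. unfold upd.
        destruct (in_dec Fin.eq_dec j' L) as [A1|A1];
          destruct (in_dec Fin.eq_dec j' (j :: L)) as [A2|A2]; try reflexivity.
        * exfalso; apply A2; right; exact A1.
        * exfalso. destruct A2 as [A2|A2]; [apply Hj'; symmetry; exact A2 | contradiction].
      + unfold upd. destruct (in_dec Fin.eq_dec j (j :: L)) as [_|A2];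
          [|exfalso; apply A2; left; reflexivity].
        destruct (in_dec Fin.eq_dec j L); [lra | apply Hle]. }
  replace g' with (upd (fin_enum n)); [apply HL|].
  apply functional_extensionality. intro j. unfold upd.
  destruct (in_dec Fin.eq_dec j (fin_enum n)) as [_|A]; [reflexivity|].
  exfalso; apply A, fin_enum_all.
Qed.

Lemma threshold_strict C t s g g' z1 :
  rd_bounded C -> rd_open C -> s <> t -> (forall j, g j <= g' j) -> C z1 ->
  g s < dist t z1 - dist s z1 < g' s ->
  (forall j, j <> t -> j <> s -> Rgam dist t j (g' j) z1) ->
  fin_lt (mu (thr_region C dist t g)) (mu (thr_region C dist t g')).
Proof.
  intros HCb HCo Hst Hle Hz1 Hs Hothers.
  set (gm := fun j => if Fin.eq_dec j s then g j else g' j).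
  assert (Hgm : forall j, j <> s -> gm j = g' j)
    by (intros j Hj; unfold gm; destruct (Fin.eq_dec j s); [contradiction | reflexivity]).
  assert (Hgms : gm s = g s) by (unfold gm; destruct (Fin.eq_dec s s); [reflexivity | contradiction]).
  apply fin_le_lt_trans with (mu (thr_region C dist t gm)).
  { apply chain_mono with s; try assumption.
    intro j. unfold gm. destruct (Fin.eq_dec j s); [lra | apply Hle]. }
  rewrite (mu_ext mu _ _ (fun z => thr_region_split C dist t gm s z Hst)).
  rewrite (mu_ext mu _ _ (fun z => thr_region_split C dist t g' s z Hst)).
  rewrite (mu_ext mu _ _ (fun z => and_iff_compat_r _ (thr_region_except_ext C dist t gm g' s z Hgm))).
  rewrite Hgms. apply strict_step with z1.
  - apply (bounded_sub _ C HCb). intros z [Hz _]. exact Hz.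
  - apply open_thr_region_except. exact HCo.
  - intro E; apply Hst; symmetry; exact E.
  - split; [exact Hz1|]. exact Hothers.
  - exact Hs.
Qed.

End Admissible.

(* Minimum of finitely many functions over the indices satisfying P (the
   seed, which satisfies P, makes the minimum well defined). *)

Fixpoint lmin (a : R) (l : list R) : R :=
  match l with nil => a | x :: l' => Rmin x (lmin a l') end.

Lemma lmin_le_in a l x : In x l -> lmin a l <= x.
Proof.
  induction l as [|y l IH]; simpl; [tauto|]. intros [<-|H]; [apply Rmin_l|].
  apply Rle_trans with (lmin a l); [apply Rmin_r | exact (IH H)].
Qed.

Lemma lmin_attained a l : lmin a l = a \/ In (lmin a l) l.
Proof.
  induction l as [|y l IH]; simpl; [left; reflexivity|]. unfold Rmin.
  destruct (Rle_dec y (lmin a l)); [right; left; reflexivity|].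
  destruct IH as [H|H]; [left; exact H | right; right; exact H].
Qed.

Definition min_over {d n} (P : Fin.t n -> Prop) (seed : Fin.t n)
  (phi : Fin.t n -> pt d -> R) (z : pt d) : R :=
  lmin (phi seed z)
    (map (fun j => if excluded_middle_informative (P j) then phi j z else phi seed z)
         (fin_enum n)).

Lemma min_over_le {d n} P seed (phi : Fin.t n -> pt d -> R) z j :
  P j -> min_over P seed phi z <= phi j z.
Proof.
  intro Hj. unfold min_over. apply lmin_le_in.
  apply in_map_iff. exists j. split; [|apply fin_enum_all].
  destruct (excluded_middle_informative (P j)); [reflexivity | contradiction].
Qed.

Lemma min_over_attained {d n} P seed (phi : Fin.t n -> pt d -> R) z :
  P seed -> exists j, P j /\ min_over P seed phi z = phi j z.
Proof.
  intro Hs. unfold min_over.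
  match goal with |- context [lmin ?a ?l] => destruct (lmin_attained a l) as [H|H] end.
  - exists seed. split; [exact Hs | exact H].
  - apply in_map_iff in H. destruct H as [j [Hj _]]. rewrite <- Hj.
    destruct (excluded_middle_informative (P j)); [exists j | exists seed]; split; auto.
Qed.

Lemma cont_min_over {d n} P seed (phi : Fin.t n -> pt d -> R) :
  (forall j, cont_fun (phi j)) -> cont_fun (min_over P seed phi).
Proof.
  intro H. unfold min_over. induction (fin_enum n) as [|j L IH]; simpl; [apply H|].
  apply cont_min; [|exact IH].
  destruct (excluded_middle_informative (P j)); apply H.
Qed.

(* The path is extended to
   the whole line by clamping its parameter to [0, 1]. *)

Definition clamp (t : R) : R := Rmax 0 (Rmin 1 t).

Lemma clamp_in t : 0 <= clamp t <= 1.
Proof. unfold clamp, Rmax, Rmin. destruct (Rle_dec 1 t); destruct (Rle_dec 0 _); lra. Qed.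

Lemma clamp_lip t t' : Rabs (clamp t - clamp t') <= Rabs (t - t').
Proof.
  unfold clamp, Rmax, Rmin. destruct (Rle_dec 1 t); destruct (Rle_dec 1 t');
  repeat match goal with |- context [Rle_dec ?a ?b] => destruct (Rle_dec a b) end;
    split_Rabs; lra.
Qed.

Lemma clamp_id t : 0 <= t <= 1 -> clamp t = t.
Proof. intro. unfold clamp. rewrite Rmin_right by lra. rewrite Rmax_right by lra. reflexivity. Qed.

Lemma path_ivt {d} (C : pt d -> Prop) (G : pt d -> R) x y v :
  cont_fun G -> rd_path_connected C -> C x -> C y -> G x < v -> v < G y ->
  exists z, C z /\ G z = v.
Proof.
  intros HG Hpc Hx Hy H1 H2. destruct (Hpc x y Hx Hy) as [p [Hp0 [Hp1 [HpC Hpcont]]]].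
  set (F := fun t => G (p (clamp t)) - v).
  assert (HF : continuity F).
  { intros t0 eps He. destruct (HG (p (clamp t0)) eps He) as [h [Hh HGh]].
    destruct (Hpcont (clamp t0) h (clamp_in t0) Hh) as [alp [Ha Hpa]].
    exists alp. split; [exact Ha|]. intros t [_ Ht]. simpl in Ht. unfold R_dist in Ht.
    simpl. unfold R_dist, F.
    replace (G (p (clamp t)) - v - (G (p (clamp t0)) - v))
      with (G (p (clamp t)) - G (p (clamp t0))) by ring.
    apply HGh. intro i. apply Hpa; [apply clamp_in|].
    apply Rle_lt_trans with (Rabs (t - t0)); [apply clamp_lip | exact Ht]. }
  destruct (IVT F 0 1 HF) as [t [Ht Ht0]]; [lra | | |].
  - unfold F. rewrite clamp_id, Hp0 by lra. lra.
  - unfold F. rewrite clamp_id, Hp1 by lra. lra.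
  - exists (p (clamp t)). split; [apply HpC, clamp_in|]. unfold F in Ht0. lra.
Qed.

Definition wdist {d n} (dist : Fin.t n -> pt d -> R) (w : Fin.t n -> R) (j : Fin.t n) (z : pt d) : R :=
  dist j z - w j.

Definition gap {d n} (T : Fin.t n -> Prop) (t1 s1 : Fin.t n) (phi : Fin.t n -> pt d -> R)
  (z : pt d) : R :=
  min_over T t1 phi z - min_over (fun j => ~ T j) s1 phi z.

Lemma VR_wins {d n} (dist : Fin.t n -> pt d -> R) w i j z :
  VR dist w i z -> j <> i -> wdist dist w i z < wdist dist w j z.
Proof. intros HV Hj. specialize (HV j Hj). unfold Rgam in HV. unfold wdist. lra. Qed.

Lemma gap_neg_in_T {d n} (dist : Fin.t n -> pt d -> R) w T t1 s1 i x :
  T i -> ~ T s1 -> VR dist w i x -> gap T t1 s1 (wdist dist w) x < 0.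
Proof.
  intros Hi Hs1 HV. unfold gap.
  assert (Hle := min_over_le T t1 (wdist dist w) x i Hi).
  destruct (min_over_attained (fun j => ~ T j) s1 (wdist dist w) x Hs1) as [j [Hj ->]].
  assert (Hji : j <> i) by (intro E; subst; contradiction).
  assert (Hwin := VR_wins dist w i j x HV Hji). lra.
Qed.

Lemma gap_pos_outside_T {d n} (dist : Fin.t n -> pt d -> R) w T t1 s1 i y :
  T t1 -> ~ T i -> VR dist w i y -> 0 < gap T t1 s1 (wdist dist w) y.
Proof.
  intros Ht1 Hi HV. unfold gap.
  assert (Hle := min_over_le (fun j => ~ T j) s1 (wdist dist w) y i Hi).
  destruct (min_over_attained T t1 (wdist dist w) y Ht1) as [j [Hj ->]].
  assert (Hji : j <> i) by (intro E; subst; contradiction).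
  assert (Hwin := VR_wins dist w i j y HV Hji). lra.
Qed.

Lemma cont_gap {d n} (dist : Fin.t n -> pt d -> R) w T t1 s1 :
  (forall i, cont_fun (dist i)) -> cont_fun (gap T t1 s1 (wdist dist w)).
Proof.
  intro Hc. assert (Hphi : forall j, cont_fun (wdist dist w j))
    by (intro j; apply cont_sub; [apply Hc | apply cont_const]).
  apply cont_sub; apply cont_min_over; exact Hphi.
Qed.

Lemma gap_crossing {d n} (dist : Fin.t n -> pt d -> R) w C T t1 s1 delta :
  (forall i, cont_fun (dist i)) -> rd_path_connected C -> T t1 -> ~ T s1 -> 0 < delta ->
  (exists x, C x /\ VR dist w t1 x) -> (exists y, C y /\ VR dist w s1 y) ->
  exists z, C z /\ 0 < gap T t1 s1 (wdist dist w) z < delta.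
Proof.
  intros Hc Hpc Ht1 Hs1 Hdelta [x [Cx Vx]] [y [Cy Vy]].
  assert (Gx := gap_neg_in_T dist w T t1 s1 t1 x Ht1 Hs1 Vx).
  assert (Gy := gap_pos_outside_T dist w T t1 s1 s1 y Ht1 Hs1 Vy).
  set (v := Rmin (delta / 2) (gap T t1 s1 (wdist dist w) y / 2)).
  assert (Hv : 0 < v) by (apply Rmin_pos; lra).
  assert (Hvd : v <= delta / 2) by apply Rmin_l.
  assert (Hvy : v <= gap T t1 s1 (wdist dist w) y / 2) by apply Rmin_r.
  destruct (path_ivt C _ x y v (cont_gap dist w T t1 s1 Hc) Hpc Cx Cy) as [z [Cz Gz]]; try lra.
  exists z. split; [exact Cz | lra].
Qed.

(* At a point z1 of C with 0 < gap < delta where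
   all weighted distances are distinct, let t be the best site of T and s the
   best site outside T.  Raising the weights of T by delta keeps t ahead of
   every other site at z1, and moves the t/s bisector across z1; hence
   VR_w'(t) contains VR_w(t) together with a neighbourhood of z1 that
   VR_w(t) misses. *)
Lemma gain_at_generic_point k n (mu : (pt (S k) -> Prop) -> ereal)
  (dist : Fin.t n -> pt (S k) -> R) C T t1 s1 (w w' : Fin.t n -> R) delta z1 :
  is_measure_on_leb mu -> mutually_ac_leb mu -> admissible mu dist ->
  (forall i, cont_fun (dist i)) ->
  (exists X : pt (S k) -> Prop, rd_bounded X /\ ~ leb_null X) ->
  rd_bounded C -> rd_open C -> T t1 -> ~ T s1 -> 0 < delta ->
  (forall i, T i -> w' i = w i + delta) -> (forall i, ~ T i -> w' i = w i) ->
  C z1 -> 0 < gap T t1 s1 (wdist dist w) z1 < delta ->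
  (forall i j, i <> j -> dist i z1 - w i <> dist j z1 - w j) ->
  exists t, T t /\
    fin_lt (mu (fun z => C z /\ VR dist w t z)) (mu (fun z => C z /\ VR dist w' t z)).
Proof.
  intros Hmu Hac Had Hc Hnonnull HCb HCo Ht1 Hs1 Hdelta HwT HwN Cz1 Hgap Hgen.
  destruct (min_over_attained T t1 (wdist dist w) z1 Ht1) as [t [Ht Et]].
  destruct (min_over_attained (fun j => ~ T j) s1 (wdist dist w) z1 Hs1) as [s [Hs Es]].
  unfold gap in Hgap. rewrite Et, Es in Hgap. unfold wdist in Hgap.
  assert (Hst : s <> t) by (intro E; subst; contradiction).
  assert (Hwt : w' t = w t + delta) by (apply HwT; exact Ht).
  exists t. split; [exact Ht|].
  apply (threshold_strict k n mu dist Hmu Hac Had Hc Hnonnull C t s _ _ z1 HCb HCo Hst);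
    [| exact Cz1 | rewrite Hwt, (HwN s Hs); lra |].
  - intro j. rewrite Hwt. destruct (classic (T j)) as [Tj|Tj];
      [rewrite (HwT j Tj) | rewrite (HwN j Tj)]; lra.
  - intros j Hjt Hjs. unfold Rgam. rewrite Hwt. destruct (classic (T j)) as [Tj|Tj].
    + rewrite (HwT j Tj). assert (Hle := min_over_le T t1 (wdist dist w) z1 j Tj).
      assert (Hne := Hgen t j (not_eq_sym Hjt)). rewrite Et in Hle. unfold wdist in Hle. lra.
    + rewrite (HwN j Tj). assert (Hle := min_over_le (fun j => ~ T j) s1 (wdist dist w) z1 j Tj).
      rewrite Es in Hle. unfold wdist in Hle. lra.
Qed.

Lemma positive_nonempty {d} (mu : (pt d -> Prop) -> ereal) (A : pt d -> Prop) :
  is_measure_on_leb mu -> ere_lt (ER 0) (mu A) -> exists z, A z.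
Proof.
  intros Hmu Hpos. apply NNPP. intro Hn.
  rewrite (mu_empty mu A Hmu) in Hpos; [simpl in Hpos; lra|].
  intros z Hz. apply Hn. exists z. exact Hz.
Qed.

Lemma positive_not_null k (mu : (pt (S k) -> Prop) -> ereal) (A : pt (S k) -> Prop) :
  mutually_ac_leb mu -> rd_open A -> ere_lt (ER 0) (mu A) -> ~ leb_null A.
Proof.
  intros Hac HA Hpos Hnull. apply (Hac A (open_meas k A HA)) in Hnull.
  rewrite Hnull in Hpos. simpl in Hpos. lra.
Qed.

Lemma VR_disjoint {d n} (dist : Fin.t n -> pt d -> R) w i j z :
  i <> j -> VR dist w i z -> VR dist w j z -> False.
Proof.
  intros Hij Hi Hj. assert (H1 := VR_wins dist w i j z Hi (not_eq_sym Hij)).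
  assert (H2 := VR_wins dist w j i z Hj Hij). lra.
Qed.

Theorem lemma2 (d n : nat) (mu : (pt d -> Prop) -> ereal)
  (site : Fin.t n -> pt d) (dist : Fin.t n -> pt d -> R)
  (C : pt d -> Prop) (T : Fin.t n -> Prop) (w w' : Fin.t n -> R) (delta : R) :
  is_measure_on_leb mu ->
  mutually_ac_leb mu ->
  (forall i j, site i = site j -> i = j) ->
  (forall i z, 0 <= dist i z) ->
  (forall i, cont_fun (dist i)) ->
  admissible mu dist ->
  rd_bounded C -> rd_open C -> rd_path_connected C ->
  (exists t, T t) -> (exists s, ~ T s) ->
  (forall i, ere_lt (ER 0) (mu (fun z => C z /\ VR dist w i z))) ->
  0 < delta ->
  (forall i, T i -> w' i = w i + delta) ->
  (forall i, ~ T i -> w' i = w i) ->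
  exists t, T t /\
    ere_lt (mu (fun z => C z /\ VR dist w t z)) (mu (fun z => C z /\ VR dist w' t z)).
Proof.
  intros Hmu Hac _ _ Hc Had HCb HCo Hpc [t1 Ht1] [s1 Hs1] Hpos Hdelta HwT HwN.
  assert (Hne : forall i, exists z, C z /\ VR dist w i z)
    by (intro i; exact (positive_nonempty mu _ Hmu (Hpos i))).
  assert (Hts : t1 <> s1) by (intro E; subst; contradiction).
  (* R^0 is a single point, which cannot lie in two Voronoi regions. *)
  destruct d as [|k].
  { destruct (Hne t1) as [x [_ Hx]], (Hne s1) as [y [_ Hy]].
    replace y with x in Hy by (apply functional_extensionality; intro i; inversion i).
    destruct (VR_disjoint dist w t1 s1 x Hts Hx Hy). }
  assert (Hnonnull : exists X : pt (S k) -> Prop, rd_bounded X /\ ~ leb_null X).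
  { exists (fun z => C z /\ VR dist w t1 z). split.
    - apply (bounded_sub _ C HCb). intros z [Hz _]. exact Hz.
    - apply (positive_not_null k mu _ Hac (open_thr_region k n dist Hc C t1 _ HCo) (Hpos t1)). }
  destruct (gap_crossing dist w C T t1 s1 delta Hc Hpc Ht1 Hs1 Hdelta (Hne t1) (Hne s1))
    as [z0 [Cz0 Hz0]].
  destruct (generic_point k n mu dist Hmu Hac Had Hc Hnonnull
              (fun z => C z /\ 0 < gap T t1 s1 (wdist dist w) z < delta) w z0)
    as [z1 [[Cz1 Hz1] Hgen]].
  - apply (bounded_sub _ C HCb). intros z [Hz _]. exact Hz.
  - apply open_and; [exact HCo | apply open_between, cont_gap; exact Hc].
  - split; assumption.
  - destruct (gain_at_generic_point k n mu dist C T t1 s1 w w' delta z1 Hmu Hac Had Hc Hnonnull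
                HCb HCo Ht1 Hs1 Hdelta HwT HwN Cz1 Hz1 Hgen) as [t [Ht Hgain]].
    exists t. split; [exact Ht | apply fin_lt_ere_lt; exact Hgain].
Qed.
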